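(* In the model described in the context, any available a-audit operation (one that collects the logs of an auditing quorum of $n-f$ storage objects) obtains, for every reader $p_r$ and value $v$ such that $v$ was effectively read by $p_r$ before the audit was invoked, records $\langle p_r,\mathit{label}(v)\rangle$ from at least $\tau-2f$ distinct objects.
   Context: Model. An asynchronous system has client processes (writers, readers, auditors) and $n$ storage objects $o_1,\dots,o_n$. Each $o_k$ is a linearisable loggable read/write register with a log $L_k$ (initially empty). Its operations are: rw-write($b$), which stores block $b$; rw-read(), which returns the current block (or $\perp$) and appends $\langle p_r,\mathit{label}(b)\rangle$ to $L_k$, where $p_r$ is the invoking reader and $\mathit{label}(b)$ identifies the value from which $b$ was derived; and rw-getLog(), which returns $L_k$. A multi-writer multi-reader register over values $\mathbb{V}$ is emulated by information dispersal. An a-write($v$) encodes $v$ into $b_{v_1},\dots,b_{v_n}$ and sends $b_{v_k}$ to $o_k$. Any $\tau$ distinct blocks of $v$ suffice to recover $v$, and fewer do not; $\tau>f$. Reads are fast (one round-trip), and concurrency is unlimited. Faults. At most $f$ storage objects are faulty. A faulty object may crash, omit its block from readers, omit log records from auditors, and report records of nonexistent reads. Correct objects follow the specification. Providing set $P_{p_r,v}$: the set of objects $o_k$ that, in the history, received a write request for $b_{v_k}$ and responded $b_{v_k}$ to a read request of $p_r$. The value $v$ is effectively read by $p_r$ iff $|P_{p_r,v}|\ge\tau$. An a-audit queries objects with rw-getLog; to be available, it uses only the logs returned by an auditing quorum of $n-f$ objects. *)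

From mathcomp Require Import all_boot.
Set Implicit Arguments. Unset Strict Implicit. Unset Printing Implicit Defensive.

Section Model.
Variables (Reader Value : eqType) (n : nat).

(* The block b_{v_k} of value v destined to object o_k is identified by (v,k). *)
Definition block := (Value * 'I_n)%type.
(* label(b): the value b was derived from; label of bottom is None. *)
Definition label (b : option block) : option Value :=
  if b is Some bb then Some bb.1 else None.
Definition record := (Reader * option Value)%type.

Inductive opkind :=
| OWrite of block
| ORead of Reader
| OGetLog.

Inductive response :=
| RAck
| RBlock of option block        (* result of rw-read (None = bottom) *)
| RLog of seq record.

(* An operation applied to an object: its kind, its (real-time) invocation
   time, linearization point and response time, and its response
   (None = no response: pending, or omitted by a crashed/faulty object). *)
Record op := Op { kind : opkind; inv : nat; lin : nat; rsp : nat;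
                  result : option response }.

Definition state := (option block * seq record)%type.
Definition step_resp (st : state) (k : opkind) : response :=
  match k with
  | OWrite _ => RAck
  | ORead _ => RBlock st.1
  | OGetLog => RLog st.2
  end.
Definition step (st : state) (k : opkind) : state :=
  match k with
  | OWrite b => (Some b, st.2)
  | ORead p => (st.1, rcons st.2 (p, label st.1))
  | OGetLog => st
  end.
Fixpoint run (st : state) (s : seq op) : Prop :=
  match s with
  | [::] => True
  | o :: s' =>
      (forall r, result o = Some r -> r = step_resp st (kind o))
      /\ run (step st (kind o)) s'
  end.

Definition well_timed (o : op) : bool :=
  (inv o <= lin o) && (if result o is Some _ then lin o <= rsp o else true).

(* The history of a correct (linearisable, specification-abiding) object:
   its operations listed in linearization order (strictly increasing
   linearization points, each inside the operation's real-time interval),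
   with responses given by the sequential specification from the initial
   state (bottom, empty log). *)
Definition correct_history (s : seq op) : Prop :=
  [/\ sorted (fun a b => lin a < lin b) s, all well_timed s & run (None, [::]) s].

Definition history := 'I_n -> seq op.

Definition is_write_of (v : Value) (k : 'I_n) (o : op) : bool :=
  if kind o is OWrite b then b == (v, k) else false.

Definition is_read_resp (p : Reader) (v : Value) (k : 'I_n) (t : nat) (o : op) : bool :=
  match kind o, result o with
  | ORead q, Some (RBlock (Some b)) => [&& q == p, b == (v, k) & rsp o < t]
  | _, _ => false
  end.

Definition providing_set (h : history) (p : Reader) (v : Value) (t : nat)
  : {set 'I_n} :=
  [set k | has (is_write_of v k) (h k) && has (is_read_resp p v k t) (h k)].

Definition effectively_read_before (tau : nat) (h : history) p v t : Prop :=
  tau <= #|providing_set h p v t|.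

Definition is_log_resp (l : seq record) (o : op) : bool :=
  if result o is Some (RLog l') then l' == l else false.

(* An a-audit invoked at time t0 that uses the logs L k returned by the
   objects k of the auditing quorum Q (each obtained by an rw-getLog
   invoked on o_k no earlier than t0). *)
Definition audit_uses (h : history) (t0 : nat) (Q : {set 'I_n})
  (L : 'I_n -> seq record) : Prop :=
  forall k, k \in Q -> has (fun o => (t0 <= inv o) && is_log_resp (L k) o) (h k).

End Model.

(* A correct object that answered a read of p_r with its block b_{v_k} appended
   <p_r, label(v)> to its log at the linearization point of that read.  The
   audit's rw-getLog on that object is invoked after the read responded, so it
   is linearized later, and since logs only grow it returns the record.  Of the
   at least tau objects providing v to p_r, at most f lie outside the auditing
   quorum and at most f are faulty, which leaves tau - 2f correct quorum members
   whose logs contain <p_r, label(v)>. *)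
From Pilot Require Import Defs.
From mathcomp Require Import all_boot.
From mathcomp Require Import zify.
Set Implicit Arguments.
Unset Strict Implicit.

Lemma leq_card_setID (T : finType) (A B C : {set T}) :
  #|A| <= #|(A :&: B) :\: C| + #|~: B| + #|C|.
Proof.
have AB : #|A :\: B| <= #|~: B| by rewrite setDE subset_leq_card ?subsetIr.
have ABC : #|A :&: B :&: C| <= #|C| by rewrite subset_leq_card ?subsetIr.
by rewrite -(cardsID B A) -(cardsID C (A :&: B)); lia.
Qed.

Section LoggableRegister.
Variables (Reader Value : eqType) (n : nat).
Implicit Types (st : state Reader Value n) (o : op Reader Value n)
  (s : seq (op Reader Value n)).

Definition spec_resp st o :=
  forall r, result o = Some r -> r = step_resp st (kind o).

Lemma step_log_subset st k : {subset st.2 <= (step st k).2}.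
Proof. by case: k => [b|q|] //= x x_st; rewrite mem_rcons inE x_st orbT. Qed.

Lemma spec_resp_getLog st o l : spec_resp st o -> is_log_resp l o -> l = st.2.
Proof.
rewrite /is_log_resp => spec_o; case res_o: (result o) => [[| |l']|] // /eqP <-.
by move: (spec_o _ res_o); case: (kind o) => //= - [].
Qed.

Lemma spec_resp_read_logged st o p v k t :
  spec_resp st o -> is_read_resp p v k t o -> (p, Some v) \in (step st (kind o)).2.
Proof.
rewrite /is_read_resp => spec_o; case kind_o: (kind o) => [|q|] //.
case res_o: (result o) => [[|[b|]|]|] // /and3P[/eqP-> /eqP b_vk _].
have [st_b] : RBlock Reader (Some b) = RBlock Reader st.1.
  by rewrite (spec_o _ res_o) kind_o.
by rewrite /= -st_b b_vk mem_rcons mem_head.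
Qed.

Lemma run_log_extends st s l :
  run st s -> has (is_log_resp l) s -> {subset st.2 <= l}.
Proof.
elim: s st => [//|o s IHs] st /= [spec_o run_s] /orP[log_o|log_s].
  by rewrite (spec_resp_getLog spec_o log_o).
by move=> x /(step_log_subset (kind o)) /(IHs _ run_s log_s).
Qed.

Lemma has_read_resp_lin_lt s p v k t :
  all (@well_timed _ _ _) s -> has (is_read_resp p v k t) s ->
  has (fun o => lin o < t) s.
Proof.
elim: s => [//|o s IHs] /= /andP[timed_o timed_s] /orP[read_o|read_s].
  move: timed_o read_o; rewrite /well_timed /is_read_resp.
  case: (kind o) (result o) => [|q|] // [[|[b|]|]|] // /andP[_ lin_rsp].
  by case/and3P=> _ _ rsp_t; rewrite (leq_ltn_trans lin_rsp rsp_t).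
by rewrite IHs ?orbT.
Qed.

Lemma run_logs_earlier_read st s p v k t l :
  run st s -> sorted (fun a b => lin a < lin b) s -> all (@well_timed _ _ _) s ->
  has (is_read_resp p v k t) s ->
  has (fun o => (t <= Defs.inv o) && is_log_resp l o) s -> (p, Some v) \in l.
Proof.
elim: s st => [//|o s IHs] st /= [spec_o run_s] sorted_os /andP[timed_o timed_s].
have later_s : all (fun o' => lin o < lin o') s.
  by apply: order_path_min sorted_os => y x z; apply: ltn_trans.
have sorted_s := path_sorted sorted_os.
case/orP=> [read_o|read_s] /orP[log_o|log_s].
- case/andP: log_o read_o => _; rewrite /is_log_resp /is_read_resp.
  by case: (result o) => [[]|]; case: (kind o).
- apply: run_log_extends run_s _ _ (spec_resp_read_logged spec_o read_o).
  by apply: sub_has log_s => o' /andP[].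
- case/andP: log_o => t_inv _; case/andP: timed_o => inv_lin _.
  have t_lin : t <= lin o := leq_trans t_inv inv_lin.
  suff : all (predC (fun o' => lin o' < t)) s.
    by rewrite all_predC (has_read_resp_lin_lt timed_s read_s).
  by apply: sub_all later_s => o' /(leq_ltn_trans t_lin)/ltnW; rewrite /= -leqNgt.
- exact: IHs run_s sorted_s timed_s read_s log_s.
Qed.

Lemma correct_history_logs_read s p v k t l :
  correct_history s -> has (is_read_resp p v k t) s ->
  has (fun o => (t <= Defs.inv o) && is_log_resp l o) s -> (p, Some v) \in l.
Proof. by case=> sorted_s timed_s run_s; exact: run_logs_earlier_read run_s sorted_s timed_s. Qed.

End LoggableRegister.

Theorem lemma1 (Reader Value : eqType) (n f tau : nat)
  (h : history Reader Value n) (F : {set 'I_n})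
  (t0 : nat) (Q : {set 'I_n}) (L : 'I_n -> seq (record Reader Value)) :
  f < tau ->
  #|F| <= f ->
  (forall k, k \notin F -> correct_history (h k)) ->
  #|Q| = n - f ->
  audit_uses h t0 Q L ->
  forall (p : Reader) (v : Value),
    effectively_read_before tau h p v t0 ->
    tau - 2 * f <= #|[set k in Q | (p, Some v) \in L k]|.
Proof.
move=> _ card_F correct card_Q audit p v; rewrite /effectively_read_before.
set P := providing_set h p v t0 => card_P.
have logged : (P :&: Q) :\: F \subset [set k in Q | (p, Some v) \in L k].
  apply/subsetP => k; rewrite /P /providing_set !inE => /and3P[k_F /andP[_ read_k] k_Q].
  by rewrite k_Q (correct_history_logs_read (correct k k_F) read_k (audit k k_Q)).
have card_notQ : #|~: Q| <= f by rewrite cardsCs setCK card_ord card_Q; lia.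
have := leq_card_setID P Q F; have := subset_leq_card logged; lia.
Qed.
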